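(* Assume the setting and condition (B) with sequence $s_{j_0}=s_-,s_{j_1}=s_+,\dots,s_{j_n}$, let $S'=S\setminus\{s_{j_n}\}$, $w=s_{j_1}\cdots s_{j_n}$, and let $\tau:W_{S'}\to W_{S/e,N}$ be the isomorphism with $\tau(s)=s$ for $s\notin\{s_{j_0},\dots,s_{j_n}\}$, $\tau(s_{j_\ell})=s_{j_{\ell+1}}$ ($1\le\ell\le n-1$), $\tau(s_{j_0})=s_0$. Define the linear map $\sigma^1:V_{S'}\to V_S$ by $\sigma^1(\alpha_s)=\alpha_s$ for $s\notin\{s_{j_0},\dots,s_{j_n}\}$ and $\sigma^1(\alpha_{s_{j_\ell}})=\sigma_{s_{j_1}}\cdots\sigma_{s_{j_n}}(\alpha_{s_{j_\ell}})$ for $0\le\ell\le n-1$. Then $\sigma^1$ is a linear isomorphism onto $V_{S/e}$, and for all $\alpha\in V_{S'}$, $x\in W_{S'}$, \[ \phi^{\mathrm{aff}}\big(\sigma^1(\alpha),\tau(x)\big)=\big(\sigma_w(\alpha),\,wxw^{-1}\big)\in V_S\rtimes W_{S,M}. \]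
   Context: A Coxeter matrix on $S$ is a symmetric matrix $M=(m_{s,s'})$ with entries in $\mathbb Z_{\ge1}\sqcup\{\infty\}$, $m_{s,s'}=1$ iff $s=s'$; $W_{S,M}$ is generated by $S$ with relations $(ss')^{m_{s,s'}}=1$ for $m_{s,s'}\ne\infty$. Edge contraction: $e=\{s_+,s_-\}$, $m_{s_+,s_-}=3$, $S/e=(S\setminus\{s_+,s_-\})\sqcup\{s_0\}$, $N=(n_{s,s'})$ with $n_{s,s}=1$, $n_{s,s'}=m_{s,s'}$ for distinct $s,s'\ne s_0$, and for $s\ne s_0$: $n_{s,s_0}=m_{s,s_+}+m_{s,s_-}-2$ if $m_{s,s_+}=2$ or $m_{s,s_-}=2$, and $n_{s,s_0}=\infty$ otherwise. $\phi:W_{S/e,N}\to W_{S,M}$ is the (injective) homomorphism $s\mapsto s$ ($s\ne s_0$), $s_0\mapsto s_+s_-s_+$. Condition (B): there exist $n\ge1$ and pairwise distinct $s_{j_0}=s_-,s_{j_1}=s_+,s_{j_2},\dots,s_{j_n}\in S$ with $m_{s_{j_k},s_{j_{k+1}}}=3$ ($0\le k\le n-1$), and for every $1\le k\le n$ and every $s\in S$ different from $s_{j_k}$, $s_{j_{k-1}}$ and (if $k<n$) $s_{j_{k+1}}$, $m_{s_{j_k},s}=2$. Reflection representation: $V_S=\bigoplus_{s\in S}\mathbb R\alpha_s$, $k_{s,s'}=2\cos(\pi/m_{s,s'})$ (with $\pi/\infty=0$), and $\sigma_s(\alpha_{s'})=\alpha_{s'}+k_{s,s'}\alpha_s$; $s\mapsto\sigma_s$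 gives a faithful representation $\sigma$ of $W_{S,M}$; write $\sigma_x$ for the image of $x$. For $S'\subseteq S$, $V_{S'}=\bigoplus_{s\in S'}\mathbb R\alpha_s\subseteq V_S$ is stable under the subgroup $W_{S'}$ generated by $S'$. Let $\alpha_{s_0}:=\alpha_{s_+}+\alpha_{s_-}$ and $V_{S/e}=\bigoplus_{s\in S/e}\mathbb R\alpha_s\subseteq V_S$; $W_{S/e,N}$ acts on $V_{S/e}$ by $\tilde\sigma_s(\alpha_{s'})=\alpha_{s'}+\tilde k_{s,s'}\alpha_s$ with $\tilde k_{s,s'}=2\cos(\pi/n_{s,s'})$. Semidirect products $V\rtimes W$ have multiplication $(\alpha,x)(\beta,y)=(\alpha+x\cdot\beta,xy)$, and $\phi^{\mathrm{aff}}:V_{S/e}\rtimes W_{S/e,N}\to V_S\rtimes W_{S,M}$ is $(\alpha,x)\mapsto(\alpha,\phi(x))$. *)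

From HB Require Import structures.
From mathcomp Require Import all_boot all_order all_algebra.
From mathcomp Require Import all_classical all_reals all_analysis.
Set Implicit Arguments.
Unset Strict Implicit.
Unset Printing Implicit Defensive.
Import Order.TTheory GRing.Theory Num.Theory.
Local Open Scope ring_scope.

(** Coxeter matrices.  An entry is [Some m] (m in Z_{>=1}) or [None] (= infinity). *)
Definition is_coxeter_matrix (T : finType) (M : T -> T -> option nat) : Prop :=
  (forall s t, M s t = M t s) /\
  (forall s t, M s t <> Some 0%N) /\
  (forall s t, M s t = Some 1%N <-> s = t).

(** The Coxeter group W_{T,M}, given by its presentation: elements are words
    (seq T) modulo the smallest congruence containing (s t)^{m_{s,t}} = 1
    for every finite m_{s,t}.  Since m_{s,s} = 1 every generator is an
    involution, so this monoid presentation presents the group W_{T,M};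
    the inverse of (the class of) a word is (the class of) its reversal. *)
Definition rel_word (T : Type) (s t : T) (m : nat) : seq T :=
  flatten (nseq m [:: s; t]).

Inductive coxeq (T : finType) (M : T -> T -> option nat) : seq T -> seq T -> Prop :=
  | coxeq_refl u : coxeq M u u
  | coxeq_sym u v : coxeq M u v -> coxeq M v u
  | coxeq_trans u v w : coxeq M u v -> coxeq M v w -> coxeq M u w
  | coxeq_ctx a b u v : coxeq M u v -> coxeq M (a ++ u ++ b) (a ++ v ++ b)
  | coxeq_rel s t m : M s t = Some m -> coxeq M (rel_word s t m) [::].

(** Reflection representation on V_T = {ffun T -> R} (coordinates w.r.t. the
    basis alpha_s). *)
Section Refl.
Variable R : realType.

Definition kcoef (T : finType) (M : T -> T -> option nat) (s t : T) : R :=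
  match M s t with
  | Some m => 2 * cos (pi / m%:R)
  | None => 2 (* 2 cos (pi/oo) = 2 cos 0 *)
  end.

Definition alpha (T : finType) (s : T) : {ffun T -> R} :=
  [ffun t => if t == s then 1 else 0].

Definition sigma (T : finType) (M : T -> T -> option nat) (s : T)
    (v : {ffun T -> R}) : {ffun T -> R} :=
  v + (\sum_(t : T) kcoef M s t * v t) *: alpha s.

Definition sigw (T : finType) (M : T -> T -> option nat) (u : seq T)
    (v : {ffun T -> R}) : {ffun T -> R} :=
  foldr (fun s acc => sigma M s acc) v u.

End Refl.

Definition Se (S : finType) (sp sm : S) : predArgType :=
  option {s : S | (s != sp) && (s != sm)}.
(* [None] is the new generator s_0; [Some a] is the generator [val a]. *)

Definition contractM (S : finType) (M : S -> S -> option nat) (sp sm : S)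
    (a b : Se sp sm) : option nat :=
  match a, b with
  | None, None => Some 1%N
  | Some x, Some y => M (val x) (val y)
  | Some x, None | None, Some x =>
      if (M (val x) sp == Some 2%N) || (M (val x) sm == Some 2%N) then
        match M (val x) sp, M (val x) sm with
        | Some p, Some q => Some (p + q - 2)%N
        | _, _ => None
        end
      else None
  end.

Definition phi_word (S : finType) (sp sm : S) (u : seq (Se sp sm)) : seq S :=
  flatten (map (fun a => match a with
                         | Some x => [:: val x]
                         | None => [:: sp; sm; sp]
                         end) u).

(* basis of V_{S/e} inside V_S: alpha_s (s <> s_0) and alpha_{s_0} = alpha_{s_+} + alpha_{s_-} *)
Definition alphaSe (R : realType) (S : finType) (sp sm : S) (a : Se sp sm) : {ffun S -> R} :=
  match a with
  | Some x => alpha R (val x)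
  | None => alpha R sp + alpha R sm
  end.

Definition in_VSe (R : realType) (S : finType) (sp sm : S) (y : {ffun S -> R}) : Prop :=
  exists c : Se sp sm -> R, y = \sum_(a : Se sp sm) c a *: alphaSe R a.

Definition in_VSub (R : realType) (S : finType) (P : pred S) (v : {ffun S -> R}) : Prop :=
  forall s, ~~ P s -> v s = 0.

(** Condition (B) for the edge {s_+, s_-}, with the sequence
    js = [:: s_{j_0}; s_{j_1}; ...; s_{j_n}]. *)
Definition condB (S : finType) (M : S -> S -> option nat) (sp sm : S) (js : seq S) : Prop :=
  [/\ [/\ (2 <= size js)%N, uniq js, nth sm js 0 = sm & nth sm js 1 = sp],
      (forall k, (k.+1 < size js)%N -> M (nth sm js k) (nth sm js k.+1) = Some 3%N) &
      (forall k s, (1 <= k < size js)%N ->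
         s != nth sm js k -> s != nth sm js k.-1 ->
         ((k.+1 < size js)%N -> s != nth sm js k.+1) ->
         M (nth sm js k) s = Some 2%N)].

(* tau : W_{S'} -> W_{S/e,N} on letters of S' = S \ {s_{j_n}}:
   s |-> s (s not in js), s_{j_l} |-> s_{j_{l+1}} (1 <= l <= n-1), s_{j_0} |-> s_0.
   (The [insub] always succeeds on letters of S' under condition (B).) *)
Definition tau_letter (S : finType) (sp sm : S) (js : seq S) (s : S) : Se sp sm :=
  let i := index s js in
  if i == 0%N then None
  else if (i < size js)%N
  then (insub (nth s js i.+1) : option {t : S | (t != sp) && (t != sm)})
  else (insub s : option {t : S | (t != sp) && (t != sm)}).

Definition tau_word (S : finType) (sp sm : S) (js : seq S) (u : seq S) : seq (Se sp sm) :=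
  map (tau_letter sp sm js) u.

Definition sigma1 (R : realType) (S : finType) (M : S -> S -> option nat) (js : seq S)
    (v : {ffun S -> R}) : {ffun S -> R} :=
  \sum_(s : S | s != last s js)
     v s *: (if s \in js then sigw M (behead js) (alpha R s) else alpha R s).

Definition phi_aff (R : realType) (S : finType) (sp sm : S)
    (p : {ffun S -> R} * seq (Se sp sm)) : {ffun S -> R} * seq S :=
  (p.1, phi_word p.2).

Definition sd_eq (R : realType) (S : finType) (M : S -> S -> option nat)
    (p q : {ffun S -> R} * seq S) : Prop :=
  p.1 = q.1 /\ coxeq M p.2 q.2.

From HB Require Import structures.
From mathcomp Require Import all_boot all_order all_algebra.
From mathcomp Require Import all_classical all_reals all_analysis.
From mathcomp Require Import ring lra zify.
Set Implicit Arguments.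
Unset Strict Implicit.
Unset Printing Implicit Defensive.
Import Order.TTheory GRing.Theory Num.Theory.
Local Open Scope ring_scope.

(* Along the chain s_{j_0}, ..., s_{j_n} consecutive generators satisfy the braid
   relation of length 3 and every s_{j_k}, k >= 1, commutes with all generators
   that are not its neighbours.  On the reflection side this makes
   sigma_w = sigma_{s_{j_1}} ... sigma_{s_{j_n}}, restricted to V_{S'}, the shift
   of coordinates alpha_{s_{j_(k-1)}} -> alpha_{s_{j_k}}; so sigma^1 = sigma_w on
   V_{S'}, it is injective, and its image is the hyperplane {y_{s_+} = y_{s_-}},
   which is V_{S/e}.  On the group side, w s w^-1 = s for s off the chain,
   w s_{j_0} w^-1 = s_+ s_- s_+, and the braid relation gives
   w s_{j_i} w^-1 = s_{j_(i+1)} for 1 <= i < n; these are exactly phi (tau s). *)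

Section CoxeterWords.
Variables (T : finType) (M : T -> T -> option nat).
Hypothesis M_diag : forall s, M s s = Some 1%N.

Definition conjw (u x : seq T) : seq T := u ++ x ++ rev u.

Lemma coxeq_cat u u' v v' :
  coxeq M u u' -> coxeq M v v' -> coxeq M (u ++ v) (u' ++ v').
Proof.
move=> eq_u eq_v; apply: coxeq_trans (_ : coxeq M (u' ++ v) _).
  exact: (coxeq_ctx [::] v eq_u).
by have := coxeq_ctx u' [::] eq_v; rewrite !cats0.
Qed.

Lemma coxeq_cancel a b s : coxeq M (a ++ [:: s; s] ++ b) (a ++ b).
Proof. exact: (coxeq_ctx a b (coxeq_rel (M_diag s))). Qed.

Lemma coxeq_comm {s t} : M s t = Some 2%N -> coxeq M [:: s; t] [:: t; s].
Proof.
move=> Mst; apply: coxeq_sym.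
apply: coxeq_trans (_ : coxeq M ([:: t; s] ++ [:: s; t; s; t] ++ [::]) _).
  exact: coxeq_sym (coxeq_ctx [:: t; s] [::] (coxeq_rel Mst)).
apply: coxeq_trans (_ : coxeq M ([:: t] ++ [:: t; s; t]) _).
  exact: (coxeq_cancel [:: t] [:: t; s; t] s).
exact: (coxeq_cancel [::] [:: s; t] t).
Qed.

Lemma coxeq_braid_conj s t : M s t = Some 3%N -> coxeq M [:: s; t; s; t; s] [:: t].
Proof.
move=> Mst; apply: coxeq_trans (_ : coxeq M ([:: s; t; s; t; s] ++ [:: t; t]) _).
  by apply: coxeq_sym; have := coxeq_cancel [:: s; t; s; t; s] [::] t; rewrite cats0.
exact: (coxeq_ctx [::] [:: t] (coxeq_rel Mst)).
Qed.

Lemma coxeq_cat_rev u : coxeq M (u ++ rev u) [::].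
Proof.
elim: u => [|x u IHu] /=; first exact: coxeq_refl.
rewrite rev_cons -cats1 catA.
apply: coxeq_trans (_ : coxeq M ([:: x] ++ [::] ++ [:: x]) _).
  exact: (coxeq_ctx [:: x] [:: x] IHu).
exact: (coxeq_cancel [::] [::] x).
Qed.

Lemma conjw_cat u1 u2 x : conjw (u1 ++ u2) x = conjw u1 (conjw u2 x).
Proof. by rewrite /conjw rev_cat -!catA. Qed.

Lemma coxeq_conjw u {x y} : coxeq M x y -> coxeq M (conjw u x) (conjw u y).
Proof. exact: coxeq_ctx. Qed.

Lemma coxeq_conjw_cat u x y : coxeq M (conjw u (x ++ y)) (conjw u x ++ conjw u y).
Proof.
apply: coxeq_sym.
have := coxeq_ctx (u ++ x) (y ++ rev u) (coxeq_cat_rev (rev u)).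
by rewrite revK /conjw -!catA.
Qed.

Lemma coxeq_conjw_commuting u x :
  {in u, forall t, M t x = Some 2%N} -> coxeq M (conjw u [:: x]) [:: x].
Proof.
elim: u => [|y u IHu] comm_x; first exact: coxeq_refl.
have conj_u : coxeq M (conjw u [:: x]) [:: x].
  by apply: IHu => t ut; apply: comm_x; rewrite inE ut orbT.
rewrite -cat1s conjw_cat; apply: coxeq_trans (coxeq_conjw [:: y] conj_u) _.
have comm_yx := coxeq_ctx [::] [:: y] (coxeq_comm (comm_x y (mem_head y u))).
exact: coxeq_trans comm_yx (coxeq_cancel [:: x] [::] y).
Qed.

End CoxeterWords.

Lemma cos_pi_div3 (R : realType) : cos (pi / 3%:R) = 1 / 2 :> R.
Proof.
set x := pi / 3%:R.
have cos_x_gt0 : 0 < cos x.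
  by apply: cos_gt0_pihalf; have := pi_gt0 R; rewrite /x => pi_gt0; apply/andP; split; lra.
have cos_triple : cos pi = 4 * cos x ^+ 3 - 3 * cos x.
  have -> : pi = x + x + x by rewrite /x; field.
  rewrite !cosD !sinD.
  have sin2 : sin x ^+ 2 = 1 - cos x ^+ 2 by rewrite -(cos2Dsin2 x); ring.
  have -> : (cos x * cos x - sin x * sin x) * cos x -
      (sin x * cos x + cos x * sin x) * sin x = cos x ^+ 3 - 3 * cos x * sin x ^+ 2 by ring.
  by rewrite sin2; ring.
(* cos (3x) = -1 factors as (cos x + 1) (2 cos x - 1)^2 = 0 *)
have : (cos x + 1) * (2 * cos x - 1) ^+ 2 = 0.
  have -> : (cos x + 1) * (2 * cos x - 1) ^+ 2 = 4 * cos x ^+ 3 - 3 * cos x + 1 by ring.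
  by rewrite -cos_triple cospi addNr.
move/eqP; rewrite mulf_eq0 sqrf_eq0 => /orP[] /eqP; lra.
Qed.

Section ReflectionRepresentation.
Variables (R : realType) (T : finType) (M : T -> T -> option nat).
Hypothesis M_diag : forall s, M s s = Some 1%N.

Lemma scale_regularE (c x : R) : c *: x = c * x.
Proof. by []. Qed.

Lemma kcoef_diag s : kcoef R M s s = -2.
Proof. by rewrite /kcoef M_diag divr1 cospi mulrN1. Qed.

Lemma kcoef_2 s t : M s t = Some 2%N -> kcoef R M s t = 0.
Proof. by move=> Mst; rewrite /kcoef Mst cos_pihalf mulr0. Qed.

Lemma kcoef_3 s t : M s t = Some 3%N -> kcoef R M s t = 1.
Proof. by move=> Mst; rewrite /kcoef Mst cos_pi_div3 mulrC mulfVK // (@pnatr_eq0 R 2). Qed.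

Lemma sum_alpha (c : T -> R) x : \sum_s c s * alpha R s x = c x.
Proof.
rewrite (bigD1 x) //= big1 ?addr0; first by rewrite ffunE eqxx mulr1.
by move=> s /negbTE s_x; rewrite ffunE eq_sym s_x mulr0.
Qed.

(* Applying sigma_s twice adds (c + (c - 2 c)) alpha_s = 0, because k_{s,s} = -2. *)
Lemma sigmaK s : involutive (@sigma R T M s).
Proof.
move=> v; apply/ffunP => t; rewrite /sigma.
set c := \sum_u kcoef R M s u * v u.
have -> : \sum_u kcoef R M s u * (v + c *: alpha R s) u = c - 2 * c.
  rewrite (eq_bigr (fun u => kcoef R M s u * v u + c * (kcoef R M s u * alpha R s u)));
    last by move=> u _; rewrite !ffunE scale_regularE; ring.
  rewrite big_split /= -/c -big_distrr /= (bigD1 s) //= big1 ?addr0;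
    last by move=> u /negbTE u_s; rewrite ffunE u_s mulr0.
  by rewrite ffunE eqxx kcoef_diag; ring.
by rewrite !ffunE !scale_regularE; ring.
Qed.

Lemma sigw_revK u : cancel (@sigw R T M u) (sigw M (rev u)).
Proof.
elim: u => [|s u IHu] v //=.
by rewrite rev_cons -cats1 /sigw foldr_cat /= sigmaK; apply: IHu.
Qed.

End ReflectionRepresentation.

Section ContractedSpan.
Variables (R : realType) (S : finType) (sp sm : S).
Hypothesis sp_neq_sm : sp != sm.

Lemma alphaSe_sp_sm (b : Se sp sm) : alphaSe R b sp = alphaSe R b sm.
Proof.
have sm_sp : (sm == sp) = false by rewrite eq_sym (negbTE sp_neq_sm).
case: b => [z|] /=; last by rewrite !ffunE !eqxx (negbTE sp_neq_sm) sm_sp addr0 add0r.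
case/andP: (valP z) => /negbTE z_sp /negbTE z_sm.
by rewrite !ffunE eq_sym z_sp eq_sym z_sm.
Qed.

Lemma span_alphaSe_sp_sm (c : Se sp sm -> R) :
  (\sum_b c b *: alphaSe R b) sp = (\sum_b c b *: alphaSe R b) sm.
Proof. by rewrite !sum_ffunE; apply: eq_bigr => b _; rewrite !ffunE alphaSe_sp_sm. Qed.

Lemma in_VSe_iff (y : {ffun S -> R}) : in_VSe sp sm y <-> y sp = y sm.
Proof.
split=> [[c ->]|y_sp_sm]; first exact: span_alphaSe_sp_sm.
pose c (b : Se sp sm) := if b is Some z then y (val z) else y sp.
exists c; apply/ffunP => t.
have [t_off|t_on] := boolP ((t != sp) && (t != sm)).
  rewrite sum_ffunE (bigD1 (Some (exist _ t t_off))) //= big1 ?addr0.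
    by rewrite !ffunE eqxx scale_regularE mulr1.
  case=> [z|] /= z_t; rewrite !ffunE scale_regularE; last first.
    by case/andP: t_off => /negbTE -> /negbTE ->; rewrite addr0 mulr0.
  case: eqP => [t_z|]; last by rewrite mulr0.
  by case/eqP: z_t; congr Some; apply: val_inj.
suff coord_sp : (\sum_b c b *: alphaSe R b) sp = y sp.
  by move: t_on; rewrite negb_and !negbK => /orP[] /eqP ->;
    rewrite -?y_sp_sm -?span_alphaSe_sp_sm coord_sp.
rewrite sum_ffunE (bigD1 None) //= big1 ?addr0 => [|[z|] // _].
  by rewrite !ffunE eqxx (negbTE sp_neq_sm) addr0 scale_regularE mulr1.
case/andP: (valP z) => /negbTE z_sp _.
by rewrite /= !ffunE eq_sym z_sp scale_regularE mulr0.
Qed.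

End ContractedSpan.

Lemma phi_word_cat (S : finType) (sp sm : S) (u v : seq (Se sp sm)) :
  phi_word (u ++ v) = phi_word u ++ phi_word v.
Proof. by rewrite /phi_word map_cat flatten_cat. Qed.

Section Chain.
Variables (R : realType) (S : finType) (M : S -> S -> option nat) (sp sm : S) (js : seq S).
Hypothesis M_coxeter : is_coxeter_matrix M.
Hypothesis chainB : condB M sp sm js.

Local Notation a k := (nth sm js k).
Local Notation N := (size js).
Local Notation sn := (last sm js).

Lemma M_sym s t : M s t = M t s.
Proof. by case: M_coxeter. Qed.

Lemma M_diag s : M s s = Some 1%N.
Proof. by case: M_coxeter => _ [_ M1]; apply/M1. Qed.

Lemma chain_size : (2 <= N)%N.
Proof. by case: chainB => [[]]. Qed.

Lemma chain_uniq : uniq js.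
Proof. by case: chainB => [[]]. Qed.

Lemma chain0 : a 0 = sm.
Proof. by case: chainB => [[]]. Qed.

Lemma chain1 : a 1 = sp.
Proof. by case: chainB => [[]]. Qed.

Lemma chain_inj i j : (i < N)%N -> (j < N)%N -> (a i == a j) = (i == j).
Proof. by move=> i_lt j_lt; rewrite nth_uniq // chain_uniq. Qed.

Lemma index_chain k : (k < N)%N -> index (a k) js = k.
Proof. by move=> k_lt; rewrite index_uniq // chain_uniq. Qed.

Lemma last_chain x0 : last x0 js = a N.-1.
Proof. by rewrite -nth_last; apply: set_nth_default; have := chain_size; lia. Qed.

Lemma sp_neq_sm : sp != sm.
Proof. by rewrite -chain0 -chain1 chain_inj //; have := chain_size; lia. Qed.

Lemma chain_braid k : (k.+1 < N)%N -> M (a k) (a k.+1) = Some 3%N.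
Proof. by case: chainB => _ braid _; apply: braid. Qed.

Lemma chain_braid_pred k : (1 <= k < N)%N -> M (a k) (a k.-1) = Some 3%N.
Proof.
by case/andP=> k_gt0 k_lt; rewrite M_sym; have := @chain_braid k.-1; rewrite prednK //; apply.
Qed.

Lemma chain_comm k t : (1 <= k < N)%N -> t != a k -> t != a k.-1 ->
  ((k.+1 < N)%N -> t != a k.+1) -> M (a k) t = Some 2%N.
Proof. by case: chainB => _ _ comm; apply: comm. Qed.

Lemma chain_comm_far k j : (1 <= k < N)%N -> (j < N)%N ->
  j != k -> j != k.-1 -> j != k.+1 -> M (a k) (a j) = Some 2%N.
Proof.
move=> k_range j_lt j_k j_pk j_sk.
by apply: chain_comm => // [||sk_lt]; rewrite chain_inj; lia.
Qed.

Lemma chain_comm_notin k x : (1 <= k < N)%N -> x \notin js -> M (a k) x = Some 2%N.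
Proof.
move=> k_range x_js; case/andP: (k_range) => k_gt0 k_lt.
have x_chain j : (j < N)%N -> x != a j.
  by move=> j_lt; apply: contraNneq x_js => ->; rewrite mem_nth.
by apply: chain_comm => // [||sk_lt]; apply: x_chain; lia.
Qed.

Lemma sum_kcoef_chain k (u : {ffun S -> R}) : (1 <= k < N)%N ->
  \sum_t kcoef R M (a k) t * u t =
    - 2 * u (a k) + u (a k.-1) + (if (k.+1 < N)%N then u (a k.+1) else 0).
Proof.
move=> k_range; have [k_gt0 k_lt] := andP k_range.
rewrite (bigD1 (a k)) //= (kcoef_diag _ M_diag).
rewrite (bigD1 (a k.-1)) /=; last by rewrite chain_inj; lia.
rewrite kcoef_3 ?chain_braid_pred //.
case: ifP => sk_lt.
  rewrite (bigD1 (a k.+1)) /=; last by rewrite !chain_inj; lia.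
  rewrite kcoef_3 ?chain_braid // big1 ?addr0; first by ring.
  by move=> t /andP[/andP[t_k t_pk] t_sk]; rewrite kcoef_2 ?mul0r ?chain_comm.
rewrite big1 ?addr0; first by ring.
move=> t /andP[t_k t_pk]; rewrite kcoef_2 ?mul0r //.
by apply: chain_comm => // sk_lt'; rewrite sk_lt' in sk_lt.
Qed.

(* On vectors vanishing at s_{j_n}, sigma_{s_{j_k}} ... sigma_{s_{j_n}} moves the
   coordinate of s_{j_(l-1)} to s_{j_l} for k <= l <= n and fixes the others. *)
Definition chain_src k (t : S) : S :=
  if (k <= index t js < N)%N then a (index t js).-1 else t.

Definition chain_shift k (v : {ffun S -> R}) : {ffun S -> R} :=
  [ffun t => v (chain_src k t)].

Lemma chain_src_nth k j : (j < N)%N -> chain_src k (a j) = if (k <= j)%N then a j.-1 else a j.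
Proof. by move=> j_lt; rewrite /chain_src index_chain // j_lt andbT. Qed.

Lemma chain_src_succ k t : t != a k -> chain_src k.+1 t = chain_src k t.
Proof.
move=> t_k; rewrite /chain_src; case: (ltnP (index t js) N) => [t_js|]; last by rewrite !andbF.
rewrite !andbT [(k <= _)%N]leq_eqVlt; case: eqP => // k_t.
by move: t_k; rewrite k_t nth_index ?eqxx // -index_mem.
Qed.

Lemma sigma_chain_shift k (v : {ffun S -> R}) : v (a N.-1) = 0 -> (1 <= k < N)%N ->
  sigma M (a k) (chain_shift k.+1 v) = chain_shift k v.
Proof.
move=> v_last k_range; have [k_gt0 k_lt] := andP k_range.
have shift_low j : (j <= k)%N -> chain_shift k.+1 v (a j) = v (a j).
  by move=> j_le; rewrite ffunE chain_src_nth ?ltnNge ?j_le //; lia.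
have shift_next : (if (k.+1 < N)%N then chain_shift k.+1 v (a k.+1) else 0) = v (a k).
  case: ifP => sk_lt; first by rewrite ffunE chain_src_nth // leqnn.
  by have -> : k = N.-1 by lia.
apply/ffunP => t; rewrite /sigma sum_kcoef_chain // shift_next !shift_low ?leq_pred //.
have [->|t_k] := eqVneq t (a k).
  by rewrite !ffunE !chain_src_nth // ltnn leqnn eqxx scale_regularE; ring.
by rewrite !ffunE chain_src_succ // (negbTE t_k) scaler0 addr0.
Qed.

Lemma sigw_drop_chain k (v : {ffun S -> R}) : v (a N.-1) = 0 -> (1 <= k <= N)%N ->
  sigw M (drop k js) v = chain_shift k v.
Proof.
move=> v_last; move Hd : (N - k)%N => d; elim: d k Hd => [|d IHd] k Hd k_range.
  have -> : k = N by lia.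
  by rewrite drop_size; apply/ffunP => t; rewrite ffunE /chain_src; case: ifP => //; lia.
have k_lt : (k < N)%N by lia.
by rewrite (drop_nth sm k_lt) /= IHd ?sigma_chain_shift //; lia.
Qed.

Lemma sigw_chain (v : {ffun S -> R}) : v (a N.-1) = 0 -> sigw M (behead js) v = chain_shift 1 v.
Proof. by move=> v_last; rewrite -drop1 sigw_drop_chain //; have := chain_size; lia. Qed.

Lemma alpha_chain_src s t : s \notin js -> alpha R s (chain_src 1 t) = alpha R s t.
Proof.
move=> s_js; rewrite /chain_src; case: ifP => // /andP[_ t_lt].
have t_s : (t == s) = false by apply: contraNF s_js => /eqP <-; rewrite -index_mem.
have pt_s : (a (index t js).-1 == s) = false.
  by apply: contraNF s_js => /eqP <-; rewrite mem_nth // (leq_ltn_trans (leq_pred _)).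
by rewrite !ffunE t_s pt_s.
Qed.

Lemma sigma1_sigw (v : {ffun S -> R}) : v sn = 0 -> sigma1 M js v = sigw M (behead js) v.
Proof.
rewrite last_chain => v_last; rewrite sigw_chain //; apply/ffunP => t.
rewrite /sigma1 sum_ffunE ffunE.
rewrite (eq_bigr (fun s => v s * alpha R s (chain_src 1 t))); last first.
  move=> s s_last; rewrite ffunE scale_regularE; congr (_ * _).
  case: ifP => [s_js|/negbT s_js]; last by rewrite alpha_chain_src.
  by rewrite sigw_chain ?ffunE // eq_sym -(last_chain s) (negbTE s_last).
rewrite big_mkcond -[RHS](sum_alpha v); apply: eq_bigr => s _.
by case: ifP => // /negbFE; rewrite last_chain => /eqP ->; rewrite v_last !mul0r.
Qed.

Lemma in_VSub_last (v : {ffun S -> R}) : in_VSub (fun s => s != sn) v -> v sn = 0.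
Proof. by apply; rewrite negbK. Qed.

Lemma sigma1_in_VSe (v : {ffun S -> R}) :
  in_VSub (fun s => s != sn) v -> in_VSe sp sm (sigma1 M js v).
Proof.
move=> /in_VSub_last v_last; rewrite in_VSe_iff ?sp_neq_sm // sigma1_sigw //.
rewrite last_chain in v_last; rewrite sigw_chain // !ffunE /chain_src.
have := index_chain (ltnW chain_size); have := index_chain chain_size.
by rewrite chain0 chain1 => -> ->; rewrite chain_size chain0.
Qed.

Lemma sigma1_inj (v1 v2 : {ffun S -> R}) :
  in_VSub (fun s => s != sn) v1 -> in_VSub (fun s => s != sn) v2 ->
  sigma1 M js v1 = sigma1 M js v2 -> v1 = v2.
Proof.
move=> /in_VSub_last v1_last /in_VSub_last v2_last.
by rewrite !sigma1_sigw //; apply: (can_inj (sigw_revK M_diag _)).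
Qed.

Definition chain_unshift (y : {ffun S -> R}) : {ffun S -> R} :=
  [ffun t => if t == a N.-1 then 0
             else if (1 <= index t js < N)%N then y (a (index t js).+1) else y t].

Lemma chain_shift_unshift (y : {ffun S -> R}) :
  y sp = y sm -> chain_shift 1 (chain_unshift y) = y.
Proof.
move=> y_sp_sm; have N_ge2 := chain_size; apply/ffunP => t; rewrite ffunE /chain_src.
case: ifP => [t_range|t_out]; rewrite ffunE.
  have [t_gt0 t_lt] := andP t_range.
  have t_js : t \in js by rewrite -index_mem.
  rewrite chain_inj ?index_chain; try lia.
  have -> : ((index t js).-1 == N.-1) = false by lia.
  have [t_1|t_ne1] := eqVneq (index t js) 1%N.
    by rewrite t_1 /= chain0 -y_sp_sm -chain1 -t_1 nth_index.
  have pred_range : (0 < (index t js).-1 < N)%N by lia.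
  by rewrite pred_range prednK ?nth_index.
rewrite ifN ?t_out //; apply: contraFN t_out => /eqP ->.
by rewrite index_chain; lia.
Qed.

Lemma sigma1_onto (y : {ffun S -> R}) : in_VSe sp sm y ->
  exists2 v, in_VSub (fun s => s != sn) v & sigma1 M js v = y.
Proof.
rewrite in_VSe_iff ?sp_neq_sm // => y_sp_sm.
have unshift_last : chain_unshift y (a N.-1) = 0 by rewrite ffunE eqxx.
exists (chain_unshift y); first by move=> s; rewrite negbK last_chain => /eqP ->.
by rewrite sigma1_sigw ?last_chain // sigw_chain // chain_shift_unshift.
Qed.

Lemma behead_chain : behead js = [seq a k | k <- iota 1 N.-1].
Proof.
have N_succ : N = N.-1.+1 by have := chain_size; lia.
by rewrite -{1}(mkseq_nth sm js) /mkseq N_succ.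
Qed.

Lemma coxeq_conjw_chain j lo n : (j < N)%N -> (0 < lo)%N -> (lo + n <= N)%N ->
  (j.+1 < lo)%N \/ (lo + n < j)%N ->
  coxeq M (conjw [seq a k | k <- iota lo n] [:: a j]) [:: a j].
Proof.
move=> j_lt lo_gt0 hi_le far; apply: (coxeq_conjw_commuting M_diag) => _ /mapP[k k_in ->].
by rewrite mem_iota in k_in; case/andP: k_in => k_ge k_lt; apply: chain_comm_far; lia.
Qed.

Lemma tau_letter_notin x : x \notin js -> phi_word [:: tau_letter sp sm js x] = [:: x].
Proof.
move=> x_js; have N_ge2 := chain_size.
have x_off : (x != sp) && (x != sm).
  by apply/andP; split; apply: contraNneq x_js => ->;
    [rewrite -chain1 mem_nth | rewrite -chain0 mem_nth // ltnW].
rewrite /tau_letter memNindex // (gtn_eqF (ltnW N_ge2)) ltnn.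
by rewrite (insubT (fun t => (t != sp) && (t != sm)) x_off).
Qed.

Lemma tau_letter_sm : phi_word [:: tau_letter sp sm js sm] = [:: sp; sm; sp].
Proof. by have := index_chain (ltnW chain_size); rewrite chain0 /tau_letter => ->. Qed.

Lemma tau_letter_chain i : (0 < i)%N -> (i.+1 < N)%N ->
  phi_word [:: tau_letter sp sm js (a i)] = [:: a i.+1].
Proof.
move=> i_gt0 si_lt; have next_off : (a i.+1 != sp) && (a i.+1 != sm).
  by apply/andP; split; [rewrite -[X in _ != X]chain1 | rewrite -[X in _ != X]chain0];
    rewrite chain_inj; lia.
rewrite /tau_letter index_chain ?(gtn_eqF i_gt0) ?(ltnW si_lt); last lia.
by rewrite (set_nth_default sm) // (insubT (fun t => (t != sp) && (t != sm)) next_off).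
Qed.

Lemma conjw_chain_notin x : x \notin js -> coxeq M [:: x] (conjw (behead js) [:: x]).
Proof.
move=> x_js; apply: coxeq_sym; apply: (coxeq_conjw_commuting M_diag) => t.
rewrite behead_chain => /mapP[k]; rewrite mem_iota => k_range ->.
by apply: chain_comm_notin => //; lia.
Qed.

Lemma conjw_chain_sm : coxeq M [:: sp; sm; sp] (conjw (behead js) [:: sm]).
Proof.
have N_pred : N.-1 = (N - 2).+1 by have := chain_size; lia.
have -> : behead js = [:: sp] ++ [seq a k | k <- iota 2 (N - 2)].
  by rewrite behead_chain N_pred -chain1.
rewrite conjw_cat.
have := coxeq_conjw_chain (j := 0) (lo := 2) (n := N - 2); rewrite chain0 => far.
have N_ge2 := chain_size.
have sm_fixed : coxeq M (conjw [seq a k | k <- iota 2 (N - 2)] [:: sm]) [:: sm].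
  by apply: far; lia.
exact: coxeq_sym (coxeq_conjw [:: sp] sm_fixed).
Qed.

(* w s_{j_i} w^-1 = s_{j_(i+1)}: in w = A s_{j_i} s_{j_(i+1)} B the factor B commutes with
   s_{j_i}, the braid relation gives s_{j_i} s_{j_(i+1)} s_{j_i} s_{j_(i+1)} s_{j_i} = s_{j_(i+1)},
   and A commutes with s_{j_(i+1)}. *)
Lemma conjw_chain_nth i : (0 < i)%N -> (i.+1 < N)%N ->
  coxeq M [:: a i.+1] (conjw (behead js) [:: a i]).
Proof.
move=> i_gt0 si_lt.
set A := [seq a k | k <- iota 1 i.-1].
set B := [seq a k | k <- iota i.+2 (N - i.+2)].
have -> : behead js = A ++ [:: a i; a i.+1] ++ B.
  rewrite behead_chain (_ : N.-1 = i.-1 + (N - i.+2).+2)%N; last by lia.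
  by rewrite iotaD map_cat (_ : 1 + i.-1 = i)%N; last by lia.
rewrite !conjw_cat; apply: coxeq_sym.
have B_comm : coxeq M (conjw B [:: a i]) [:: a i] by apply: coxeq_conjw_chain; lia.
have braid : coxeq M (conjw [:: a i; a i.+1] [:: a i]) [:: a i.+1].
  by rewrite /conjw /=; apply: (coxeq_braid_conj M_diag); apply: chain_braid.
have A_comm : coxeq M (conjw A [:: a i.+1]) [:: a i.+1] by apply: coxeq_conjw_chain; lia.
apply: coxeq_trans (coxeq_conjw A (coxeq_conjw [:: a i; a i.+1] B_comm)) _.
exact: coxeq_trans (coxeq_conjw A braid) A_comm.
Qed.

Lemma phi_tau_letter x : x != sn ->
  coxeq M (phi_word [:: tau_letter sp sm js x]) (conjw (behead js) [:: x]).
Proof.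
rewrite last_chain => x_last.
have [x_js|x_js] := boolP (x \in js); last first.
  by rewrite tau_letter_notin //; apply: conjw_chain_notin.
have [i i_lt ->] : exists2 i, (i < N.-1)%N & x = a i.
  exists (index x js); last by rewrite nth_index.
  have : (index x js < N)%N by rewrite index_mem.
  suff : index x js != N.-1 by lia.
  by apply: contraNneq x_last => <-; rewrite nth_index.
have [->|i_gt0] := posnP i; first by rewrite chain0 tau_letter_sm; apply: conjw_chain_sm.
by rewrite tau_letter_chain //; [apply: conjw_chain_nth | ]; lia.
Qed.

Lemma phi_tau_word x : all (fun s => s != sn) x ->
  coxeq M (phi_word (tau_word sp sm js x)) (conjw (behead js) x).
Proof.
elim: x => [_|y x IHx /andP[y_last x_last]]; first exact: coxeq_sym (coxeq_cat_rev M_diag _).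
have -> : tau_word sp sm js (y :: x) = [:: tau_letter sp sm js y] ++ tau_word sp sm js x by [].
rewrite phi_word_cat; apply: coxeq_trans (coxeq_cat (phi_tau_letter y_last) (IHx x_last)) _.
exact: coxeq_sym (coxeq_conjw_cat M_diag _ [:: y] x).
Qed.

End Chain.

Theorem mainTheorem3 (R : realType) (S : finType) (M : S -> S -> option nat)
    (sp sm : S) (js : seq S) :
  is_coxeter_matrix M ->
  M sp sm = Some 3%N ->
  condB M sp sm js ->
  let sn := last sm js in             (* s_{j_n} *)
  let inS' := fun s : S => s != sn in  (* S' = S \ {s_{j_n}} *)
  let w := behead js in                (* w = s_{j_1} ... s_{j_n} *)
  [/\ (forall v : {ffun S -> R}, in_VSub inS' v -> in_VSe sp sm (sigma1 M js v)),
      (forall v1 v2 : {ffun S -> R}, in_VSub inS' v1 -> in_VSub inS' v2 ->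
          sigma1 M js v1 = sigma1 M js v2 -> v1 = v2),
      (forall y : {ffun S -> R}, in_VSe sp sm y -> exists2 v, in_VSub inS' v & sigma1 M js v = y)
    & forall (v : {ffun S -> R}) (x : seq S),
        in_VSub inS' v -> all inS' x ->
        sd_eq M (phi_aff (sigma1 M js v, tau_word sp sm js x))
                (sigw M w v, w ++ x ++ rev w)].
Proof.
(* m_{s_+,s_-} = 3 is the case k = 0 of condition (B). *)
move=> M_coxeter _ chainB sn inS' w; split.
- exact: (sigma1_in_VSe M_coxeter chainB).
- exact: (sigma1_inj M_coxeter chainB).
- exact: (sigma1_onto M_coxeter chainB).
- move=> v x v_S' x_S'; split; last exact: (phi_tau_word M_coxeter chainB).
  by rewrite /= (sigma1_sigw M_coxeter chainB) // (in_VSub_last v_S').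
Qed.
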